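(* Let $d>1$ and $f\ge0$ be integers, let $n=2d+f$, and let $\beta\in\mathcal S_n$ have cycle structure $d^2\cdot1^f$ (two $d$-cycles and $f$ fixed points). Then $(\varepsilon,\beta,\beta;(12))\in\mathrm{Par}(n)$ if and only if either <ul> <li>(i) $d$ is even and $f=0$, or</li> <li>(ii) $d$ is odd and $f\le d+1$.</li> </ul>
   Context: A Latin square of order $n$ is an $n\times n$ array with rows, columns and symbols indexed by $[n]$, each symbol occurring once in each row and each column, with triple set $O(L)$. Permutations act on the right; $\varepsilon$ is the identity. A paratopism $(\alpha,\beta,\gamma;(12))$ maps $L$ to $L^\sigma$ with triple set $\{(y\beta,x\alpha,z\gamma):(x,y,z)\in O(L)\}$; it is an autoparatopism of $L$ if $L^\sigma=L$. $\mathrm{Par}(n)$ is the set of paratopisms that are autoparatopisms of at least one Latin square of order $n$. *)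

From mathcomp Require Import all_boot all_fingroup.
Set Implicit Arguments. Unset Strict Implicit. Unset Printing Implicit Defensive.

Definition latin_square (n : nat) (L : 'I_n -> 'I_n -> 'I_n) : Prop :=
  (forall x, bijective (L x)) /\ (forall y, bijective (fun x => L x y)).

Definition triples (n : nat) (L : 'I_n -> 'I_n -> 'I_n) : {set 'I_n * 'I_n * 'I_n} :=
  [set (x, y, L x y) | x : 'I_n, y : 'I_n].

(* Image of L under the paratopism (alpha, beta, gamma; (12)), given by its triple
   set { (y beta, x alpha, z gamma) : (x,y,z) in O(L) }.  Permutations act on the
   right, so "y beta" is the image of y under beta. *)
Definition para12_triples (n : nat) (a b c : 'S_n) (L : 'I_n -> 'I_n -> 'I_n)
  : {set 'I_n * 'I_n * 'I_n} :=
  [set (b t.1.2, a t.1.1, c t.2) | t in triples L].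

Definition autoparatopism12 (n : nat) (a b c : 'S_n) (L : 'I_n -> 'I_n -> 'I_n) : Prop :=
  para12_triples a b c L = triples L.

Definition in_Par12 (n : nat) (a b c : 'S_n) : Prop :=
  exists L : 'I_n -> 'I_n -> 'I_n, latin_square L /\ autoparatopism12 a b c L.

Definition ncycles (n : nat) (s : 'S_n) (k : nat) : nat :=
  #|[set X in porbits s | #|X| == k]|.

Definition cycle_structure_d2_1f (n : nat) (s : 'S_n) (d f : nat) : Prop :=
  ncycles s d = 2 /\ ncycles s 1 = f /\
  (forall k, k != d -> k != 1%N -> ncycles s k = 0).

From mathcomp Require Import all_boot all_fingroup all_algebra.
From mathcomp Require Import ring zify.
Set Implicit Arguments. Unset Strict Implicit. Unset Printing Implicit Defensive.
Import GRing.Theory.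

(* Relabelling the points, beta becomes [spin], the shift a |-> a + 1 on two
   copies (false, _) and (true, _) of Z_d that fixes f further points.  The
   autoparatopism condition reads L (y beta) x = (L x y) beta; applying it twice
   gives L (x beta^k) (y beta^k) = (L x y) beta^(2k).
   If d is even and t is fixed, k = d/2 makes row t take the same value at y and
   at y beta^(d/2).  If d is odd, consider the columns in which row (false, 0)
   carries a fixed symbol: none of them is fixed, and in the first cycle only the
   column a with 2a = -1 is possible, so f <= d + 1.
   Conversely, for f = 0 add coordinatewise in Z_2 x Z_d.  For d odd, put the
   fixed symbols in the cells between the two cycles whose difference lies in a
   set P closed under a |-> -a - 1, and for f = d + 1 use in addition the
   diagonals b - a = (d - 1)/2 inside each cycle. *)

Definition latin (T : finType) (L : T -> T -> T) : Prop :=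
  (forall x, injective (L x)) /\ (forall y, injective (L^~ y)).

Definition autopar12 (T : Type) (b : T -> T) (L : T -> T -> T) : Prop :=
  forall x y, L (b y) x = b (L x y).

Definition par12 (T : finType) (b : T -> T) : Prop :=
  exists L : T -> T -> T, latin L /\ autopar12 b L.

Section Autoparatopism.
Variables (T : Type) (b : T -> T) (L : T -> T -> T).
Hypothesis bL : autopar12 b L.

Lemma autopar12_col_inj : (forall x, injective (L x)) -> forall y, injective (L^~ y).
Proof. by move=> rows y x1 x2 /= E; apply: (rows (b y)); rewrite !bL E. Qed.

Lemma autopar12_iter_double k x y : L (iter k b x) (iter k b y) = iter k.*2 b (L x y).
Proof. by elim: k => [|k IH] //; rewrite doubleS !iterS bL bL IH. Qed.

Lemma autopar12_iter_odd k x y : L (iter k.+1 b y) (iter k b x) = iter k.*2.+1 b (L x y).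
Proof. by rewrite iterS bL autopar12_iter_double. Qed.

End Autoparatopism.

Lemma par12_intro (T : finType) (b : T -> T) (L : T -> T -> T) :
  autopar12 b L -> (forall x, injective (L x)) -> par12 b.
Proof. by move=> bL rows; exists L; split=> //; split=> //; apply: autopar12_col_inj. Qed.

Lemma latin_squareP n (L : 'I_n -> 'I_n -> 'I_n) : latin_square L <-> latin L.
Proof.
split=> [[rows cols] | [rows cols]].
  by split=> [x | y]; [exact: bij_inj (rows x) | exact: bij_inj (cols y)].
by split=> [x | y]; apply: injF_bij; [exact: rows | exact: cols].
Qed.

Lemma autoparatopism12_1E n (b : 'S_n) (L : 'I_n -> 'I_n -> 'I_n) :
  autoparatopism12 1%g b b L <-> autopar12 b L.
Proof.
rewrite /autoparatopism12 /para12_triples /triples; split=> [E x y | bL].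
  have : (b y, (1%g : 'S_n) x, b (L x y)) \in
      [set (b t.1.2, (1%g : 'S_n) t.1.1, b t.2) | t in [set (x0, y0, L x0 y0) | x0, y0]].
    by apply/imsetP; exists (x, y, L x y) => //; apply/imset2P; exists x y.
  by rewrite E perm1 => /imset2P [u v _ _ [-> -> ->]].
apply/setP => t; apply/imsetP/imset2P => [[s /imset2P [u v _ _ ->] ->] | [u v _ _ ->]].
  by exists (b v) u => //; rewrite perm1 bL.
exists (v, (b^-1)%g u, L v ((b^-1)%g u)); first by apply/imset2P; exists v ((b^-1)%g u).
by rewrite /= perm1 -bL permKV.
Qed.

Lemma in_Par12_1E n (b : 'S_n) : in_Par12 1%g b b <-> par12 b.
Proof.
split=> -[L [L_latin bL]]; exists L.
  by split; [apply/latin_squareP | apply/autoparatopism12_1E].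
by split; [apply/latin_squareP | apply/autoparatopism12_1E].
Qed.

Lemma par12_conj (T U : finType) (b : T -> T) (c : U -> U) (phi : T -> U) :
  bijective phi -> (forall x, c (phi x) = phi (b x)) -> par12 b -> par12 c.
Proof.
case=> psi phiK psiK phi_b [L [[rows _] bL]].
have psi_c y : psi (c y) = b (psi y) by rewrite -{1}[y]psiK phi_b phiK.
apply: (@par12_intro _ _ (fun x y => phi (L (psi x) (psi y)))).
  by move=> x y; rewrite psi_c bL phi_b.
by move=> x y1 y2 /(can_inj phiK) /rows /(can_inj psiK).
Qed.

Lemma par12_conjE (T U : finType) (b : T -> T) (c : U -> U) (phi : T -> U) :
  bijective phi -> (forall x, c (phi x) = phi (b x)) -> par12 b <-> par12 c.
Proof.
move=> phi_bij phi_b; split; first exact: par12_conj phi_bij phi_b.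
case: phi_bij => psi phiK psiK; apply: (@par12_conj _ _ _ _ psi); first by exists phi.
by move=> y; rewrite -{2}[y]psiK phi_b phiK.
Qed.

Section Spin.
Variables (m : nat) (F : finType).
Local Notation d := m.+2.
Local Open Scope ring_scope.

Definition spin (x : (bool * 'I_d) + F) : (bool * 'I_d) + F :=
  if x is inl (i, a) then inl (i, a + 1) else x.

Lemma natr_Zp_order : d%:R = 0 :> 'I_d.
Proof. exact: (@pchar_Zp d isT). Qed.

Lemma val_natr_Zp k : val (k%:R : 'I_d) = (k %% d)%N.
Proof. exact: (@val_Zp_nat d isT). Qed.

Lemma val_opp_sub1 (a : 'I_d) : - a - 1 = (m.+1 - a)%N :> nat.
Proof.
have -> : - a - 1 = (d - a.+1)%N%:R.
  by rewrite natrB ?ltn_ord // natr_Zp_order -natr1 natr_Zp; ring.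
by rewrite val_natr_Zp subSS modn_small // ltnS leq_subr.
Qed.

Lemma inl_inj i j (a b : 'I_d) :
  inl (i, a) = inl (j, b) :> (bool * 'I_d) + F -> i = j /\ a = b.
Proof. by case. Qed.

Lemma iter_spin_inl k i (a : 'I_d) : iter k spin (inl (i, a)) = inl (i, a + k%:R).
Proof. by elim: k => [|k IH]; rewrite ?addr0 // iterS IH /= -addrA -natr1. Qed.

Lemma iter_spin_inr k (t : F) : iter k spin (inr t) = inr t.
Proof. by elim: k => //= k ->. Qed.

Lemma iter_spin_order x : iter d spin x = x.
Proof.
by case: x => [[i a]|t]; rewrite ?iter_spin_inr // iter_spin_inl natr_Zp_order addr0.
Qed.

End Spin.

Section PermOrbits.
Variables (T : finType) (s : {perm T}).

Lemma porbit_fix x : s x = x -> porbit s x = [set x].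
Proof.
move=> sx; apply/setP => y; rewrite inE; apply/porbitP/eqP => [[i ->] | ->].
  exact: permX_fix.
by exists 0; rewrite expg0 perm1.
Qed.

Lemma card_porbit1 x : (#|porbit s x| == 1) = (s x == x).
Proof.
apply/eqP/eqP => [o1 | /porbit_fix ->]; last exact: cards1.
by have := iter_porbit s x; rewrite o1.
Qed.

Lemma card_1cycles : #|[set X in porbits s | #|X| == 1]| = #|[set x | s x == x]|.
Proof.
have -> : [set X in porbits s | #|X| == 1] = porbit s @: [set x | s x == x].
  apply/setP => X; rewrite inE; apply/andP/imsetP => [[/imsetP [x _ ->] ox] | [x]].
    by move: ox; rewrite card_porbit1 => sx; exists x; rewrite ?inE.
  by rewrite inE => sx ->; rewrite imset_f ?card_porbit1.
apply: card_in_imset => x y; rewrite !inE => /eqP/porbit_fix -> /eqP/porbit_fix ->.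
exact: set1_inj.
Qed.

Lemma iter_porbit_inj x : {in gtn #|porbit s x| &, injective (fun k => iter k s x)}.
Proof.
move=> i j ilt jlt /= E; apply/eqP.
rewrite -(nth_uniq x _ _ (uniq_traject_porbit s x)) ?size_traject //.
by rewrite !nth_traject // E.
Qed.

Lemma iter_porbit_mod x k : iter (k %% #|porbit s x|) s x = iter k s x.
Proof.
rewrite {2}(divn_eq k #|porbit s x|) addnC iterD; congr iter.
by elim: (k %/ _) => [|q IH] //; rewrite mulSn iterD -IH iter_porbit.
Qed.

Lemma porbit_iter k x : porbit s (iter k s x) = porbit s x.
Proof. by rewrite -permX porbit_perm. Qed.

End PermOrbits.

Section SpinConjugacy.
Variables (n m : nat) (s : 'S_n) (F : finType).
Variables (base : bool -> 'I_n) (g : F -> 'I_n).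
Hypothesis base_card : forall i, #|porbit s (base i)| = m.+2.
Hypothesis base_porbit_inj : injective (fun i => porbit s (base i)).
Hypotheses (g_inj : injective g) (g_fix : forall t, s (g t) = g t).
Hypothesis hn : n = 2 * m.+2 + #|F|.

Definition spin_embed (x : (bool * 'I_m.+2) + F) : 'I_n :=
  match x with inl (i, a) => iter a s (base i) | inr t => g t end.

Lemma spin_embed_conj x : s (spin_embed x) = spin_embed (spin x).
Proof.
case: x => [[i a]|t] /=; last exact: g_fix.
by rewrite (@modn_small 1) // -[X in _ %% X](base_card i) iter_porbit_mod addn1.
Qed.

Lemma spin_embed_inj : injective spin_embed.
Proof.
have not_fixed k i t : iter k s (base i) <> g t.
  move=> E; have := base_card i.
  by rewrite -(porbit_iter _ k) E porbit_fix // cards1.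
case=> [[i a]|t] [[j c]|u] //= E.
- have ij : i = j by apply: base_porbit_inj; rewrite /= -(porbit_iter _ a) E porbit_iter.
  subst j; congr (inl (i, _)); apply: val_inj.
  by apply: (iter_porbit_inj _ _ E); rewrite inE /= base_card.
- by case: (not_fixed _ _ _ E).
- by case: (not_fixed _ _ _ (esym E)).
- by rewrite (g_inj E).
Qed.

Lemma spin_embed_bij : bijective spin_embed.
Proof.
apply: (inj_card_bij spin_embed_inj).
by rewrite card_sum card_prod card_bool !card_ord -hn.
Qed.

End SpinConjugacy.

Lemma in_Par12_spinE m f n (s : 'S_n) (F : finType) :
  n = 2 * m.+2 + f -> cycle_structure_d2_1f s m.+2 f -> #|F| = f ->
  in_Par12 1%g s s <-> par12 (@spin m F).
Proof.
move=> hn [two_cycles [fixed _]] cardF; rewrite /ncycles card_1cycles in fixed.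
have [X1 [X2 [X12 EX]]] : exists X1 X2,
    X1 != X2 /\ [set X in porbits s | #|X| == m.+2] = [set X1; X2].
  by apply/cards2P; rewrite -two_cycles.
have cycle_rep X : X \in [set X1; X2] -> exists2 x, #|porbit s x| = m.+2 & X = porbit s x.
  by rewrite -EX inE => /andP [/imsetP [x _ ->] /eqP]; exists x.
have [x1 x1_card X1E] := cycle_rep X1 (setU11 _ _).
have [x2 x2_card X2E] := cycle_rep X2 (setU1r _ (set11 _)).
pose base i := if i then x2 else x1.
have base_card i : #|porbit s (base i)| = m.+2 by case: i.
have base_porbit_inj : injective (fun i => porbit s (base i)).
  by move: X12; rewrite X1E X2E => /eqP X12 [] [] //= /esym.
have cardF_fixed : #|F| = #|[set x | s x == x]| by rewrite cardF fixed.
pose g t := enum_val (cast_ord cardF_fixed (enum_rank t)).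
have g_inj : injective g by move=> t u /enum_val_inj /cast_ord_inj /enum_rank_inj.
have g_fix t : s (g t) = g t.
  by have := enum_valP (cast_ord cardF_fixed (enum_rank t)); rewrite inE => /eqP.
have hnF : n = 2 * m.+2 + #|F| by rewrite cardF.
rewrite in_Par12_1E; symmetry.
exact: par12_conjE (spin_embed_bij base_card base_porbit_inj g_inj g_fix hnF)
  (spin_embed_conj base_card g_fix).
Qed.

Section OddModulus.
Variable m : nat.
Local Notation d := m.+2.
Hypothesis d_odd : odd d.
Local Open Scope ring_scope.

Lemma double_Zp_inj : injective (fun a : 'I_d => a + a).
Proof.
have half2 : ((d.+1)./2 + (d.+1)./2)%N = d.+1.
  by rewrite addnn -[RHS](odd_double_half d.+1) oddS d_odd.
suff halfK (a : 'I_d) : (a + a) * ((d.+1)./2)%:R = a.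
  by move=> a b /= ab; rewrite -[a]halfK -[b]halfK ab.
rewrite (_ : (a + a) * _ = a * ((d.+1)./2 + (d.+1)./2)%N%:R); last by rewrite natrD; ring.
by rewrite half2 -addn1 natrD natr_Zp_order add0r mulr1.
Qed.

Lemma double_Zp_affine_inj (c : 'I_d) : injective (fun a => c + a + a + 1).
Proof.
move=> a1 a2 /= E; apply: double_Zp_inj; apply: (addIr 1); apply: (@addrI _ c).
by rewrite !addrA.
Qed.

Lemma double_half_pred : ((m.+1)./2 + (m.+1)./2)%N = m.+1.
Proof.
have ev : odd m.+1 = false by apply/negbTE; rewrite -oddS.
by rewrite addnn -[RHS](odd_double_half m.+1) ev.
Qed.

Definition mid : 'I_d := ((m.+1)./2)%:R.

Lemma opp_sub1_mid : - mid - 1 = mid.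
Proof.
have mid_mid : mid + mid + 1 = 0 by rewrite -natrD natr1 double_half_pred natr_Zp_order.
by rewrite -[LHS]addr0 -mid_mid; ring.
Qed.

Lemma opp_sub1_eq_mid a : (- a - 1 == mid) = (a == mid).
Proof.
apply/eqP/eqP => [E | ->]; last exact: opp_sub1_mid.
have -> : a = - (- a - 1) - 1 by ring.
by rewrite E opp_sub1_mid.
Qed.

End OddModulus.

Section SpinNecessity.
Variables (m : nat) (F : finType).
Local Notation d := m.+2.
Local Notation T := ((bool * 'I_d) + F)%type.
Local Open Scope ring_scope.

Lemma spin_par12_even : ~~ odd d -> F -> ~ par12 (@spin m F).
Proof.
move=> d_even t [L [[rows _] bL]].
have half2 : (d./2).*2 = d by rewrite -[RHS](odd_double_half d) (negbTE d_even).
have := autopar12_iter_double bL d./2 (inr t) (inl (false, 0) : T).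
rewrite half2 iter_spin_order iter_spin_inr => /rows.
rewrite iter_spin_inl add0r => -[] /(congr1 val) /=.
by rewrite val_natr_Zp modn_small // -[X in (_ < X)%N]half2 -addnn; lia.
Qed.

Lemma spin_par12_odd : odd d -> par12 (@spin m F) -> (#|F| <= d.+1)%N.
Proof.
move=> d_odd [L [[rows cols] bL]].
pose x0 : T := inl (false, 0).
have [col colK Kcol] := injF_bij (rows x0).
have L_col t : L x0 (col (inr t)) = inr t by rewrite Kcol.
have col_notF t u : col (inr t) <> inr u.
  move=> E; have Lu : L x0 (inr u) = inr t by rewrite -E L_col.
  have := autopar12_iter_double bL 1 x0 (inr u).
  by rewrite /= Lu /= -Lu => /cols [] /eqP; rewrite add0n !modn_small.
have col_first t a : col (inr t) = inl (false, a) -> a + a = -1.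
  move=> E; have La : L x0 (inl (false, a)) = inr t by rewrite -E L_col.
  have := autopar12_iter_odd bL (val (- a - 1)) x0 (inl (false, a)).
  rewrite La iter_spin_inr !iter_spin_inl -natr1 !natr_Zp add0r.
  rewrite (_ : a + (- a - 1 + 1) = 0); last by ring.
  by rewrite -La => /rows [] aE; rewrite -{1}aE; ring.
pose h t : option 'I_d := if col (inr t) is inl (true, a) then Some a else None.
suff h_inj : injective h by have := leq_card _ h_inj; rewrite card_option card_ord.
move=> t u; rewrite /h.
case Et: (col (inr t)) => [[[] a]|t']; last by case: (col_notF _ _ Et).
all: case Eu: (col (inr u)) => [[[] b]|u']; last by case: (col_notF _ _ Eu).
all: move=> // ab; suff /(can_inj Kcol) [] : col (inr t) = col (inr u) by [].
all: rewrite Et Eu.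
- by case: ab => ->.
- by rewrite (double_Zp_inj d_odd (etrans (col_first _ _ Et) (esym (col_first _ _ Eu)))).
Qed.

End SpinNecessity.

Lemma count_iota_window n lo hi c (o : bool) : lo <= c < hi ->
  count (fun v => [&& lo <= v, v < hi & o || (v != c)]) (iota 0 n)
    = minn n hi - minn n lo - (~~ o && (c < n)).
Proof.
move=> /andP [lo_c c_hi]; elim: n => [|n IH]; first by rewrite !min0n.
rewrite -addn1 iotaD count_cat /= addn0 add0n; move: IH.
by case: o; case: (leqP lo n) => ?; case: (ltnP n hi) => ?; case: (eqVneq n c) => ? /=; lia.
Qed.

Lemma card_ord_window n lo hi c (o : bool) : lo <= c < hi -> hi <= n ->
  #|[pred x : 'I_n | [&& lo <= x, x < hi & o || (val x != c)]]| = hi - lo - ~~ o.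
Proof.
move=> c_in hi_n; rewrite cardE /enum_mem size_filter -enumT /=.
rewrite (_ : count _ _ = count (fun v => [&& lo <= v, v < hi & o || (v != c)]) (iota 0 n)).
  by rewrite count_iota_window //; move: c_in => /andP [? ?]; case: o => /=; lia.
by rewrite -val_enum_ord count_map.
Qed.

Lemma exists_opp_sub1_closed m f : odd m.+2 -> f <= m.+2 ->
  exists P : pred 'I_m.+2, (forall a, P (- a - 1)%R = P a) /\ #|P| = f.
Proof.
move=> d_odd f_le; pose c := (m.+1)./2; pose h := f./2.
have cc : c + c = m.+1 := double_half_pred d_odd.
have hh : odd f + (h + h) = f by rewrite addnn odd_double_half.
(* a window around c, the fixed point of a |-> -a - 1, minus c itself when f is even *)
pose P (a : 'I_m.+2) := [&& c - h <= a, a < c + h + 1 & odd f || (a != c :> nat)].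
exists P; split=> [a | ].
  rewrite /P val_opp_sub1; have := ltn_ord a.
  by case: (odd f) => a_lt; apply/idP/idP => /and3P [? ? ?]; apply/and3P; split; lia.
rewrite (card_ord_window _ _ _ (c := c)); first by case: (odd f) hh => /=; lia.
  by apply/andP; split; lia.
by case: (odd f) hh; lia.
Qed.

Lemma exists_comm_quasigroup (F : finType) :
  exists M : F -> F -> F, (forall s t, M s t = M t s) /\ (forall s, injective (M s)).
Proof.
pose add (i j : 'I_#|F|) : 'I_#|F| :=
  Ordinal (ltn_pmod (i + j) (leq_ltn_trans (leq0n i) (ltn_ord i))).
exists (fun s t => enum_val (add (enum_rank s) (enum_rank t))); split=> [s t | s t1 t2].
  by congr enum_val; apply/val_inj; rewrite /= addnC.
move=> /enum_val_inj [] /eqP; rewrite eqn_modDl !modn_small ?ltn_ord // => /eqP E.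
by apply: enum_rank_inj; apply/val_inj.
Qed.

Section Constructions.
Variable m : nat.
Local Notation d := m.+2.
Local Open Scope ring_scope.

Definition void_square (x y : (bool * 'I_d) + void) : (bool * 'I_d) + void :=
  match x, y with
  | inl (i, a), inl (j, b) => inl (i (+) j, a + b)
  | inr v, _ | _, inr v => match v with end
  end.

Lemma spin_par12_void : par12 (@spin m void).
Proof.
apply: (@par12_intro _ _ void_square).
  by case=> [[i a]|[]] [[j b]|[]] /=; rewrite addbC; congr (inl (_, _)); ring.
case=> [[i a]|[]] [[j1 b1]|[]] [[j2 b2]|[]] //= /inl_inj [ij /addrI ->].
by rewrite (addbI ij).
Qed.

Section SymmetricFixedPoints.
Hypothesis d_odd : odd d.
Variable P : pred 'I_d.
Hypothesis P_opp_sub1 : forall a, P (- a - 1) = P a.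
Local Notation F := {a : 'I_d | P a}.
Local Notation T := ((bool * 'I_d) + F)%type.
Variable M : F -> F -> F.
Hypotheses (M_comm : forall s t, M s t = M t s) (M_inj : forall s, injective (M s)).

(* The autoparatopism relates cell (x, y) to cell (y beta, x); in the second
   cycle this sends the difference b - a to -(b - a) - 1, whence the closure of P. *)
Definition sym_square (x y : T) : T :=
  match x, y with
  | inl (false, a), inl (false, b) => inl (false, a + b)
  | inl (true, a), inl (true, b) => inl (P (b - a), a + b)
  | inl (false, a), inl (true, b) =>
      if insub (b - a) is Some s then inr s else inl (true, a + b)
  | inl (true, a), inl (false, b) =>
      if insub (a - b - 1) is Some s then inr s else inl (true, a + b)
  | inl (i, a), inr s => inl (~~ i, val s + a + a)
  | inr s, inl (i, a) => inl (~~ i, val s + a + a + 1)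
  | inr s, inr t => inr (M s t)
  end.

Definition sym_square_inv (i : bool) (a : 'I_d) (z : T) : T :=
  match i, z with
  | false, inl (false, c) => inl (false, c - a)
  | false, inl (true, c) | true, inl (false, c) =>
      if insub (c - a - a) is Some s then inr s else inl (true, c - a)
  | true, inl (true, c) => inl (P (c - a - a), c - a)
  | false, inr s => inl (true, val s + a)
  | true, inr s => inl (false, a - val s - 1)
  end.

Lemma sym_square_autopar : autopar12 (@spin m F) sym_square.
Proof.
case=> [[[] a]|s] [[[] b]|t] /=; try by congr (inl (_, _)); ring.
- rewrite (_ : a - (b + 1) = - (b - a) - 1) ?P_opp_sub1; last by ring.
  by congr (inl (_, _)); ring.
- rewrite (_ : a - (b + 1) = a - b - 1); last by ring.
  by case: insubP => //= *; congr (inl (_, _)); ring.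
- rewrite (_ : b + 1 - a - 1 = b - a); last by ring.
  by case: insubP => //= *; congr (inl (_, _)); ring.
- by rewrite M_comm.
Qed.

Lemma sym_squareK i a : cancel (sym_square (inl (i, a))) (sym_square_inv i a).
Proof.
case: i; case=> [[[] b]|t] /=.
- rewrite (_ : a + b - a - a = b - a); last by ring.
  case: ifP => Pb; rewrite ?Pb; first by congr (inl (_, _)); ring.
  by rewrite insubN ?Pb //; congr (inl (_, _)); ring.
- case: insubP => [s Ps Es | nP] /=; first by rewrite Es; congr (inl (_, _)); ring.
  rewrite (_ : a + b - a - a = - (a - b - 1) - 1); last by ring.
  by rewrite P_opp_sub1 (negbTE nP); congr (inl (_, _)); ring.
- by rewrite (_ : val t + a + a - a - a = val t) ?valK //; ring.
- case: insubP => [s Ps Es | nP] /=; first by rewrite Es; congr (inl (_, _)); ring.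
  rewrite (_ : a + b - a - a = b - a); last by ring.
  by rewrite insubN //; congr (inl (_, _)); ring.
- by congr (inl (_, _)); ring.
- by rewrite (_ : val t + a + a - a - a = val t) ?valK //; ring.
Qed.

Lemma sym_square_row_inj x : injective (sym_square x).
Proof.
case: x => [[i a]|s]; first exact: can_inj (sym_squareK i a).
case=> [[i1 a1]|t1] [[i2 a2]|t2] //= => [| [] /M_inj -> //].
by move=> /inl_inj [/negb_inj -> /(double_Zp_affine_inj d_odd) ->].
Qed.

End SymmetricFixedPoints.

Section AllFixedPoints.
Hypothesis d_odd : odd d.
Local Notation T := ((bool * 'I_d) + option 'I_d)%type.
Variable M : option 'I_d -> option 'I_d -> option 'I_d.
Hypotheses (M_comm : forall s t, M s t = M t s) (M_inj : forall s, injective (M s)).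
Local Notation mid := (mid m).

(* As [sym_square] with P full, except that the extra fixed symbol [None] takes
   the cells with b - a = mid, the fixed point of a |-> -a - 1. *)
Definition full_square (x y : T) : T :=
  match x, y with
  | inl (i, a), inl (j, b) =>
      if i == j then (if b - a == mid then inr None else inl (i, a + b))
      else inr (Some (if i then a - b - 1 else b - a))
  | inl (i, a), inr None => inl (i, mid + a + a)
  | inl (i, a), inr (Some s) => inl (~~ i, s + a + a)
  | inr None, inl (i, a) => inl (i, mid + a + a + 1)
  | inr (Some s), inl (i, a) => inl (~~ i, s + a + a + 1)
  | inr u, inr v => inr (M u v)
  end.

Definition full_square_inv (i : bool) (a : 'I_d) (z : T) : T :=
  match z with
  | inl (j, c) =>
      if j == i then (if c - a - a == mid then inr None else inl (i, c - a))
      else inr (Some (c - a - a))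
  | inr None => inl (i, a + mid)
  | inr (Some s) => if i then inl (false, a - s - 1) else inl (true, s + a)
  end.

Lemma full_square_autopar : autopar12 (@spin m (option 'I_d)) full_square.
Proof.
case=> [[[] a]|[s|]] [[[] b]|[t|]] /=;
  try (by rewrite M_comm); try (by congr (inl (_, _)); ring);
  try (by congr (inr (Some _)); ring); try done.
all: rewrite (_ : a - (b + 1) = - (b - a) - 1) ?(opp_sub1_eq_mid d_odd); last by ring.
all: by case: eqP => _ //=; congr (inl (_, _)); ring.
Qed.

Lemma full_squareK i a : cancel (full_square (inl (i, a))) (full_square_inv i a).
Proof.
case: i; case=> [[[] b]|[t|]] /=;
  try (by congr (inl (_, _)); ring); try (by congr (inr (Some _)); ring);
  try (by rewrite (_ : mid + a + a - a - a = mid) ?eqxx //; ring).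
all: case: eqP => [E | NE] /=; first by congr (inl (_, _)); rewrite -E; ring.
all: rewrite (_ : a + b - a - a = b - a); last by ring.
all: by move/eqP/negbTE: NE => ->; congr (inl (_, _)); ring.
Qed.

Lemma full_square_row_inj x : injective (full_square x).
Proof.
case: x => [[i a]|u]; first exact: can_inj (full_squareK i a).
case: u => [s|] [[i1 a1]|v1] [[i2 a2]|v2] //= => [|[] /M_inj -> //|| [] /M_inj -> //].
  by move=> /inl_inj [/negb_inj -> /(double_Zp_affine_inj d_odd) ->].
by move=> /inl_inj [-> /(double_Zp_affine_inj d_odd) ->].
Qed.

End AllFixedPoints.

End Constructions.

Lemma spin_par12_sym m (P : pred 'I_m.+2) : odd m.+2 ->
  (forall a, P (- a - 1)%R = P a) -> par12 (@spin m {a | P a}).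
Proof.
move=> d_odd P_sym; have [M [M_comm M_inj]] := exists_comm_quasigroup {a | P a}.
apply: par12_intro (sym_square_autopar P_sym M_comm) _ => x.
exact: (@sym_square_row_inj _ d_odd _ P_sym _ M_inj x).
Qed.

Lemma spin_par12_full m : odd m.+2 -> par12 (@spin m (option 'I_m.+2)).
Proof.
move=> d_odd; have [M [M_comm M_inj]] := exists_comm_quasigroup (option 'I_m.+2).
apply: par12_intro (full_square_autopar d_odd M_comm) _ => x.
exact: (@full_square_row_inj _ d_odd _ M_inj x).
Qed.

Theorem theorem4p14 (d f n : nat) (hd : 1 < d) (hn : n = 2 * d + f)
  (beta : 'S_n) (hbeta : cycle_structure_d2_1f beta d f) :
  in_Par12 1%g beta beta <->
  ((~~ odd d /\ f = 0) \/ (odd d /\ f <= d + 1)).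
Proof.
case: d hd hn hbeta => [|[|m]] // _ hn hbeta.
split=> [|[[d_even f0] | [d_odd f_le]]].
- rewrite (in_Par12_spinE hn hbeta (card_ord f)).
  case: (boolP (odd m.+2)) => [d_odd | d_even] HP; [right | left]; split=> //.
    by have := spin_par12_odd d_odd HP; rewrite card_ord addn1.
  by case: f {hn hbeta} HP => // f /(spin_par12_even d_even ord0).
- rewrite f0 in hn hbeta.
  by rewrite (in_Par12_spinE hn hbeta card_void); apply: spin_par12_void.
- have [f_max | f_ne] := eqVneq f m.+3.
    rewrite (in_Par12_spinE hn hbeta (F := option 'I_m.+2)); first exact: spin_par12_full.
    by rewrite card_option card_ord.
  have f_le' : f <= m.+2 by lia.
  have [P [P_sym cardP]] := exists_opp_sub1_closed d_odd f_le'.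
  rewrite (in_Par12_spinE hn hbeta (F := {a | P a})); first exact: spin_par12_sym.
  by rewrite card_sig.
Qed.
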